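(* Let $\{S_{\mathbf a^{[k]}},\,k\ge0\}$ and $\{S_{\mathbf a^{*[k]}},\,k\ge0\}$ be two local subdivision schemes which both reproduce constants, with difference schemes $\{S_{\mathbf q^{[k]}},\,k\ge0\}$ and $\{S_{\mathbf q^{*[k]}},\,k\ge0\}$. Then the following are equivalent: (i) $\lim_{k\to\infty}\|\mathbf a^{[k]}-\mathbf a^{*[k]}\|=0$ (the schemes are asymptotically similar); (ii) $\lim_{k\to\infty}\|\mathbf q^{[k]}-\mathbf q^{*[k]}\|=0$. If in addition one of the two schemes is bounded (i.e. $\sup_k\|S_{\mathbf a^{[k]}}\|<\infty$ or $\sup_k\|S_{\mathbf a^{*[k]}}\|<\infty$), then (i) is also equivalent to: (iii) for every fixed integer $p\ge0$, $\lim_{k\to\infty}\|S_{\mathbf q^{[k+p]}}\cdots S_{\mathbf q^{[k]}}-S_{\mathbf q^{*[k+p]}}\cdots S_{\mathbf q^{*[k]}}\|=0$.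
   Context: A subdivision scheme $\{S_{\mathbf a^{[k]}},\,k\ge0\}$ is given by finitely supported masks $\mathbf a^{[k]}=\{a^{[k]}_i\}_{i\in\mathbb Z}$ and operators $(S_{\mathbf a^{[k]}}\mathbf f)_i=\sum_{j\in\mathbb Z}a^{[k]}_{i-2j}f_j$ on $\mathbf f\in\mathbb R^{\mathbb Z}$. Local means: there is a positive integer $N$ with all masks supported in $[-N,N]$. Norms are sup-norms: $\|\mathbf a\|=\sup_i|a_i|$ for masks/sequences, and $\|S_{\mathbf a}\|=\max(\sum_i|a_{2i}|,\sum_i|a_{2i+1}|)$ for operators (operator sup-norm). The scheme reproduces constants if $\sum_ia^{[k]}_{2i}=\sum_ia^{[k]}_{2i+1}=1$ for all $k$; then its difference scheme has masks $q^{[k]}_i=\sum_{j\le i}(-1)^{i-j}a^{[k]}_j$ (equivalently, symbols satisfy $a^{[k]}(z)=(1+z)q^{[k]}(z)$ where $a(z)=\sum_ia_iz^i$). *)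

From Stdlib Require Import Reals Lra Lia ZArith List ClassicalEpsilon.
From Coquelicot Require Import Coquelicot.
Open Scope R_scope.

Definition mask := Z -> R.

(* Finite sum g m + g (m+1) + ... + g n  (empty if n < m). *)
Definition zsum (m n : Z) (g : Z -> R) : R :=
  fold_right Rplus 0
    (map (fun k : nat => g (m + Z.of_nat k)%Z) (seq 0 (Z.to_nat (n - m + 1)))).

(* Sum over all of Z of a finitely supported g (window chosen by epsilon;
   any window containing the support gives the same value).  Unspecified
   if g is not finitely supported (never used in that case). *)
Definition sumZ (g : Z -> R) : R :=
  let M := epsilon (inhabits 0%nat)
             (fun M : nat => forall i, (Z.of_nat M < Z.abs i)%Z -> g i = 0) in
  zsum (- Z.of_nat M) (Z.of_nat M) g.

Definition subd (a : mask) (f : Z -> R) : Z -> R :=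
  fun i => sumZ (fun j => a (i - 2 * j)%Z * f j).

Definition local (a : nat -> mask) : Prop :=
  exists N : Z, (0 < N)%Z /\ forall k i, (N < Z.abs i)%Z -> a k i = 0.

Definition reproduces_constants (a : nat -> mask) : Prop :=
  forall k, sumZ (fun i => a k (2 * i)%Z) = 1 /\ sumZ (fun i => a k (2 * i + 1)%Z) = 1.

Definition diff_mask (a : mask) : mask :=
  fun i => sumZ (fun j => if (j <=? i)%Z then (-1) ^ (Z.to_nat (i - j)) * a j else 0).

Definition mask_norm (a : mask) : R :=
  real (Lub_Rbar (fun x => exists i, x = Rabs (a i))).

Definition subd_norm (a : mask) : R :=
  Rmax (sumZ (fun i => Rabs (a (2 * i)%Z))) (sumZ (fun i => Rabs (a (2 * i + 1)%Z))).

Definition opnorm (T : (Z -> R) -> (Z -> R)) : R :=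
  real (Lub_Rbar (fun x => exists (f : Z -> R) (i : Z),
                      (forall j, Rabs (f j) <= 1) /\ x = Rabs (T f i))).

Fixpoint prod_ops (a : nat -> mask) (k p : nat) : (Z -> R) -> (Z -> R) :=
  match p with
  | O => subd (a k)
  | S p' => fun f => subd (a (k + p)%nat) (prod_ops a k p' f)
  end.

Definition bounded_scheme (a : nat -> mask) : Prop :=
  exists C : R, forall k, subd_norm (a k) <= C.

(* Since a_i = q_i + q_(i-1) and q_i is an alternating sum of at most 2N+1 coefficients of a,
   the sup-norms of a - a* and of q - q* bound each other up to constants, whence (i) <=> (ii).
   For (iii), a difference of products of subdivision operators telescopes into terms each of
   which contains one factor S_(q[m]) - S_(q*[m]), of norm O(||q[m] - q*[m]||), while the other
   factors stay bounded: one difference scheme is bounded because its scheme is, and the other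
   one because the two difference masks are uniformly close.  Conversely S_q - S_q* applied to
   the unit impulse returns q - q*, which is the case p = 0. *)
From Stdlib Require Import Reals Lra Lia ZArith List ClassicalEpsilon FunctionalExtensionality.
From Coquelicot Require Import Coquelicot.
Open Scope R_scope.

Definition wsum (m : Z) (L : nat) (g : Z -> R) : R :=
  fold_right Rplus 0 (map (fun k : nat => g (m + Z.of_nat k)%Z) (seq 0 L)).

Definition supported_on (g : Z -> R) (m : Z) (L : nat) : Prop :=
  forall i, (i < m \/ m + Z.of_nat L <= i)%Z -> g i = 0.

Definition supported_within (a : Z -> R) (K : nat) : Prop :=
  forall i, (Z.of_nat K < Z.abs i)%Z -> a i = 0.

Lemma wsum_nil m g : wsum m 0 g = 0.
Proof. reflexivity. Qed.

Lemma wsum_cons m L g : wsum m (S L) g = g m + wsum (m + 1) L g.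
Proof.
  unfold wsum. cbn [seq map fold_right]. rewrite Z.add_0_r. f_equal.
  rewrite <- seq_shift, map_map. f_equal. apply map_ext. intro k. f_equal. lia.
Qed.

Lemma wsum_ext m L g h : (forall i, g i = h i) -> wsum m L g = wsum m L h.
Proof. intro H. unfold wsum. f_equal. apply map_ext. auto. Qed.

Lemma wsum_add m L g h : wsum m L (fun i => g i + h i) = wsum m L g + wsum m L h.
Proof.
  revert m; induction L as [|L IH]; intro m; [rewrite !wsum_nil; lra|].
  rewrite !wsum_cons, IH. lra.
Qed.

Lemma wsum_scal m L g c : wsum m L (fun i => c * g i) = c * wsum m L g.
Proof.
  revert m; induction L as [|L IH]; intro m; [rewrite !wsum_nil; lra|].
  rewrite !wsum_cons, IH. lra.
Qed.

Lemma wsum_app m L n g : wsum m (L + n) g = wsum m L g + wsum (m + Z.of_nat L) n g.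
Proof.
  revert m; induction L as [|L IH]; intro m.
  - rewrite wsum_nil, Z.add_0_r. simpl. lra.
  - change (S L + n)%nat with (S (L + n)). rewrite !wsum_cons, IH.
    replace (m + 1 + Z.of_nat L)%Z with (m + Z.of_nat (S L))%Z by lia. lra.
Qed.

Lemma wsum_zero m L g : (forall i, (m <= i < m + Z.of_nat L)%Z -> g i = 0) -> wsum m L g = 0.
Proof.
  revert m; induction L as [|L IH]; intros m H; [apply wsum_nil|].
  rewrite wsum_cons, H, IH by (intros; try apply H; lia). lra.
Qed.

Lemma wsum_nonneg m L g : (forall j, 0 <= g j) -> 0 <= wsum m L g.
Proof.
  intro H. revert m; induction L as [|L IH]; intro m; [rewrite wsum_nil; lra|].
  rewrite wsum_cons. specialize (IH (m + 1)%Z). specialize (H m). lra.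
Qed.

Lemma wsum_ge_term m L g i : (forall j, 0 <= g j) -> (m <= i < m + Z.of_nat L)%Z ->
  g i <= wsum m L g.
Proof.
  intro H. revert m; induction L as [|L IH]; intros m Hi; [simpl in Hi; lia|].
  rewrite wsum_cons. destruct (Z.eq_dec i m) as [->|ne].
  - pose proof (wsum_nonneg (m + 1) L g H). lra.
  - specialize (IH (m + 1)%Z ltac:(lia)). specialize (H m). lra.
Qed.

Lemma wsum_abs_le m L g B : (forall i, Rabs (g i) <= B) -> Rabs (wsum m L g) <= INR L * B.
Proof.
  intro H. revert m; induction L as [|L IH]; intro m.
  - rewrite wsum_nil, Rabs_R0. simpl. lra.
  - rewrite wsum_cons, S_INR. eapply Rle_trans; [apply Rabs_triang|].
    specialize (IH (m + 1)%Z). specialize (H m). lra.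
Qed.

Lemma wsum_even_odd m L g :
  wsum (2 * m) (2 * L) g = wsum m L (fun i => g (2 * i)%Z) + wsum m L (fun i => g (2 * i + 1)%Z).
Proof.
  revert m; induction L as [|L IH]; intro m; [rewrite !wsum_nil; lra|].
  replace (2 * S L)%nat with (S (S (2 * L))) by lia.
  rewrite !wsum_cons. replace (2 * m + 1 + 1)%Z with (2 * (m + 1))%Z by lia.
  rewrite IH. lra.
Qed.

Lemma wsum_widen g m L m0 L0 : supported_on g m L -> (m0 <= m)%Z ->
  (m + Z.of_nat L <= m0 + Z.of_nat L0)%Z -> wsum m0 L0 g = wsum m L g.
Proof.
  intros Hs H1 H2.
  set (n1 := Z.to_nat (m - m0)). set (n2 := (L0 - n1 - L)%nat).
  replace L0 with (n1 + (L + n2))%nat by (unfold n2, n1; lia).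
  rewrite !wsum_app, (wsum_zero m0 n1), (wsum_zero _ n2) by (intros; apply Hs; unfold n1 in *; lia).
  replace (m0 + Z.of_nat n1)%Z with m by (unfold n1; lia). lra.
Qed.

Lemma wsum_window_indep g m L m' L' : supported_on g m L -> supported_on g m' L' ->
  wsum m L g = wsum m' L' g.
Proof.
  intros H H'.
  set (m0 := Z.min m m').
  set (L0 := Z.to_nat (Z.max (m + Z.of_nat L) (m' + Z.of_nat L') - m0)).
  rewrite <- (wsum_widen g m L m0 L0), <- (wsum_widen g m' L' m0 L0); auto; unfold m0, L0; lia.
Qed.

Lemma sumZ_window g m L : supported_on g m L -> sumZ g = wsum m L g.
Proof.
  intro H. unfold sumZ.
  set (P := fun M : nat => forall i, (Z.of_nat M < Z.abs i)%Z -> g i = 0).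
  assert (HP : P (epsilon (inhabits 0%nat) P)).
  { apply epsilon_spec. exists (Z.to_nat (Z.max (Z.abs m) (Z.abs (m + Z.of_nat L)))).
    intros i Hi. apply H. lia. }
  set (M := epsilon (inhabits 0%nat) P) in *.
  apply wsum_window_indep; auto. intros i Hi. apply HP. lia.
Qed.

Lemma supported_within_window g K : supported_within g K -> supported_on g (- Z.of_nat K) (2 * K + 1).
Proof. intros H i Hi. apply H. lia. Qed.

Lemma sumZ_ext g h : (forall i, g i = h i) -> sumZ g = sumZ h.
Proof. intro H. f_equal. apply functional_extensionality; auto. Qed.

Lemma sumZ_zero g : (forall i, g i = 0) -> sumZ g = 0.
Proof. intro H. rewrite (sumZ_window g 0 0); [apply wsum_nil|]. intros i _. auto. Qed.

Lemma sumZ_add g h m L : supported_on g m L -> supported_on h m L ->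
  sumZ (fun i => g i + h i) = sumZ g + sumZ h.
Proof.
  intros Hg Hh. rewrite (sumZ_window g m L Hg), (sumZ_window h m L Hh), (sumZ_window _ m L).
  - apply wsum_add.
  - intros i Hi. rewrite Hg, Hh by auto. lra.
Qed.

Lemma sumZ_sub g h m L : supported_on g m L -> supported_on h m L ->
  sumZ (fun i => g i - h i) = sumZ g - sumZ h.
Proof.
  intros Hg Hh. rewrite (sumZ_window g m L Hg), (sumZ_window h m L Hh), (sumZ_window _ m L).
  - replace (wsum m L g - wsum m L h) with (wsum m L g + -1 * wsum m L h) by ring.
    rewrite <- wsum_scal, <- wsum_add. apply wsum_ext. intro; lra.
  - intros i Hi. rewrite Hg, Hh by auto. lra.
Qed.

Lemma sumZ_indicator i c : sumZ (fun j => if Z.eqb j i then c else 0) = c.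
Proof.
  rewrite (sumZ_window _ i 1).
  - rewrite wsum_cons, wsum_nil, Z.eqb_refl. lra.
  - intros j Hj. destruct (Z.eqb_spec j i); [lia|auto].
Qed.

Lemma sumZ_abs_le g m L B : supported_on g m L -> (forall i, Rabs (g i) <= B) ->
  Rabs (sumZ g) <= INR L * B.
Proof. intros Hs H. rewrite (sumZ_window g m L Hs). apply wsum_abs_le; auto. Qed.

Lemma abs_le_sumZ_abs g K t : supported_within g K -> Rabs (g t) <= sumZ (fun i => Rabs (g i)).
Proof.
  intro Hg.
  rewrite (sumZ_window _ (- Z.of_nat K) (2 * K + 1))
    by (intros i Hi; rewrite (supported_within_window g K Hg i Hi); apply Rabs_R0).
  destruct (Z_le_gt_dec (Z.abs t) (Z.of_nat K)).
  - apply (wsum_ge_term _ _ (fun i => Rabs (g i))); [intro; apply Rabs_pos|lia].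
  - rewrite Hg, Rabs_R0 by lia. apply wsum_nonneg. intro; apply Rabs_pos.
Qed.

Lemma supported_within_bounded g K : supported_within g K -> exists B, forall i, Rabs (g i) <= B.
Proof. intro Hg. eexists. intro i. exact (abs_le_sumZ_abs g K i Hg). Qed.

Lemma real_Lub_Rbar_bounded (E : R -> Prop) b x0 : (forall x, E x -> x <= b) -> E x0 ->
  (forall x, E x -> x <= real (Lub_Rbar E)) /\ real (Lub_Rbar E) <= b.
Proof.
  intros Hb H0. destruct (Lub_Rbar_correct E) as [Hub Hlub].
  destruct (Lub_Rbar E) as [r| |].
  - split; [exact Hub|]. apply (Hlub (Finite b)). exact Hb.
  - exfalso. exact (Hlub (Finite b) Hb).
  - exfalso. exact (Hub x0 H0).
Qed.

Lemma mask_norm_spec x B : (forall i, Rabs (x i) <= B) ->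
  (forall i, Rabs (x i) <= mask_norm x) /\ mask_norm x <= B.
Proof.
  intro H. unfold mask_norm.
  destruct (real_Lub_Rbar_bounded (fun y => exists i, y = Rabs (x i)) B (Rabs (x 0%Z)))
    as [H1 H2].
  - intros y [i ->]. auto.
  - exists 0%Z; auto.
  - split; auto. intro i. apply H1. exists i; auto.
Qed.

Lemma abs_le_mask_norm x K i : supported_within x K -> Rabs (x i) <= mask_norm x.
Proof.
  intro Hx. destruct (supported_within_bounded x K Hx) as [B HB].
  exact (proj1 (mask_norm_spec x B HB) i).
Qed.

Lemma mask_norm_le x B : (forall i, Rabs (x i) <= B) -> mask_norm x <= B.
Proof. intro H. exact (proj2 (mask_norm_spec x B H)). Qed.

Lemma mask_norm_nonneg x K : supported_within x K -> 0 <= mask_norm x.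
Proof.
  intro Hx. eapply Rle_trans; [apply Rabs_pos|exact (abs_le_mask_norm x K 0%Z Hx)].
Qed.

Lemma supported_within_sub a b K : supported_within a K -> supported_within b K ->
  supported_within (fun i => a i - b i) K.
Proof. intros Ha Hb i Hi. rewrite Ha, Hb by exact Hi. ring. Qed.

Lemma opnorm_spec (T : (Z -> R) -> (Z -> R)) b :
  (forall f i, (forall j, Rabs (f j) <= 1) -> Rabs (T f i) <= b) ->
  (forall f i, (forall j, Rabs (f j) <= 1) -> Rabs (T f i) <= opnorm T) /\ opnorm T <= b.
Proof.
  intro H. unfold opnorm.
  set (E := fun x => exists (f : Z -> R) (i : Z), (forall j, Rabs (f j) <= 1) /\ x = Rabs (T f i)).
  assert (E0 : E (Rabs (T (fun _ => 0) 0%Z))).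
  { exists (fun _ => 0), 0%Z. split; auto. intro; rewrite Rabs_R0; lra. }
  assert (Hb : forall x, E x -> x <= b) by (intros x [f [i [Hf ->]]]; auto).
  destruct (real_Lub_Rbar_bounded E b _ Hb E0) as [H1 H2].
  split; auto. intros f i Hf. apply H1. exists f, i. auto.
Qed.

Lemma opnorm_nonneg (T : (Z -> R) -> (Z -> R)) b :
  (forall f i, (forall j, Rabs (f j) <= 1) -> Rabs (T f i) <= b) -> 0 <= opnorm T.
Proof.
  intro H. eapply Rle_trans; [apply (Rabs_pos (T (fun _ => 0) 0%Z))|].
  apply (proj1 (opnorm_spec T b H)). intro; rewrite Rabs_R0; lra.
Qed.

Lemma pow_m1_even (x : Z) : (0 <= x)%Z -> (-1) ^ Z.to_nat x = if Z.even x then 1 else -1.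
Proof.
  intro Hx. rewrite <- (Z2Nat.id x) at 2 by exact Hx. induction (Z.to_nat x) as [|n IH]; [reflexivity|].
  rewrite Nat2Z.inj_succ, Z.even_succ, <- Z.negb_even. simpl pow. rewrite IH.
  destruct (Z.even (Z.of_nat n)); simpl; lra.
Qed.

Definition diff_term (a : mask) (i j : Z) : R :=
  if (j <=? i)%Z then (-1) ^ Z.to_nat (i - j) * a j else 0.

Lemma diff_term_supported a K i : supported_within a K ->
  supported_on (diff_term a i) (- Z.of_nat K) (2 * K + 1).
Proof. intros H j Hj. unfold diff_term. rewrite H by lia. destruct (j <=? i)%Z; lra. Qed.

Lemma diff_mask_sub a b K i : supported_within a K -> supported_within b K ->
  diff_mask a i - diff_mask b i = diff_mask (fun j => a j - b j) i.
Proof.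
  intros Ha Hb. unfold diff_mask. fold (diff_term a i) (diff_term b i).
  rewrite <- (sumZ_sub _ _ _ _ (diff_term_supported a K i Ha) (diff_term_supported b K i Hb)).
  apply sumZ_ext. intro j. unfold diff_term. destruct (j <=? i)%Z; ring.
Qed.

Lemma diff_mask_abs_le a K B i : supported_within a K -> (forall j, Rabs (a j) <= B) ->
  Rabs (diff_mask a i) <= INR (2 * K + 1) * B.
Proof.
  intros Ha HB. apply (sumZ_abs_le _ _ _ _ (diff_term_supported a K i Ha)).
  intro j. unfold diff_term. destruct (j <=? i)%Z.
  - rewrite Rabs_mult, <- RPow_abs, Rabs_m1, pow1, Rmult_1_l. apply HB.
  - rewrite Rabs_R0. eapply Rle_trans; [apply Rabs_pos|apply (HB j)].
Qed.

Lemma diff_mask_recover a K i : supported_within a K ->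
  a i = diff_mask a i + diff_mask a (i - 1)%Z.
Proof.
  intro Ha. unfold diff_mask. fold (diff_term a i) (diff_term a (i - 1)).
  rewrite <- (sumZ_add _ _ _ _ (diff_term_supported a K i Ha) (diff_term_supported a K (i - 1) Ha)).
  rewrite <- (sumZ_indicator i (a i)) at 1. apply sumZ_ext. intro j. unfold diff_term.
  destruct (Z.eqb_spec j i) as [->|ne].
  - rewrite Z.leb_refl, Z.sub_diag. replace (i <=? i - 1)%Z with false by lia. simpl. lra.
  - destruct (Z.leb_spec j i), (Z.leb_spec j (i - 1)); try lia; [|lra].
    rewrite !pow_m1_even by lia. replace (i - j)%Z with (Z.succ (i - 1 - j)) by lia.
    rewrite Z.even_succ, <- Z.negb_even. destruct (Z.even (i - 1 - j)); simpl; lra.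
Qed.

(* Beyond the support of a, q_l = +/- (sum of even coefficients - sum of odd ones), which
   vanishes when constants are reproduced. *)
Lemma diff_mask_supported a K : supported_within a K ->
  sumZ (fun i => a (2 * i)%Z) = 1 -> sumZ (fun i => a (2 * i + 1)%Z) = 1 ->
  supported_within (diff_mask a) K.
Proof.
  intros Ha H0 H1 l Hl. unfold diff_mask. fold (diff_term a l).
  destruct (Z_lt_le_dec l 0).
  - apply sumZ_zero. intro j. unfold diff_term.
    destruct (Z.leb_spec j l); [rewrite Ha by lia|]; lra.
  - set (s := if Z.even l then 1 else -1).
    rewrite (sumZ_window _ (2 * - Z.of_nat K) (2 * (2 * K + 1)))
      by (intros j Hj; apply (diff_term_supported a K l Ha); lia).
    rewrite wsum_even_odd.
    assert (E0 : forall i, diff_term a l (2 * i) = s * a (2 * i)%Z).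
    { intro i. unfold diff_term, s. destruct (Z.leb_spec (2 * i) l).
      - rewrite pow_m1_even, Z.even_sub, Z.even_even by lia. destruct (Z.even l); simpl; lra.
      - rewrite Ha by lia. lra. }
    assert (E1 : forall i, diff_term a l (2 * i + 1) = - s * a (2 * i + 1)%Z).
    { intro i. unfold diff_term, s. destruct (Z.leb_spec (2 * i + 1) l).
      - rewrite pow_m1_even, Z.even_sub, Z.even_odd by lia. destruct (Z.even l); simpl; lra.
      - rewrite Ha by lia. lra. }
    rewrite (wsum_ext _ _ _ _ E0), (wsum_ext _ _ _ _ E1), !wsum_scal.
    rewrite <- (sumZ_window (fun i => a (2 * i)%Z)), <- (sumZ_window (fun i => a (2 * i + 1)%Z)), H0, H1;
      [lra| |]; intros i Hi; apply Ha; lia.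
Qed.

Lemma abs_le_subd_norm a K j : supported_within a K -> Rabs (a j) <= subd_norm a.
Proof.
  intro Ha. unfold subd_norm. rewrite (Z.div_mod j 2) by lia.
  assert (Hm : (j mod 2 = 0 \/ j mod 2 = 1)%Z) by (Z.div_mod_to_equations; lia).
  destruct Hm as [-> | ->].
  - rewrite Z.add_0_r. eapply Rle_trans; [|apply Rmax_l].
    apply (abs_le_sumZ_abs (fun i => a (2 * i)%Z) K). intros i Hi. apply Ha. lia.
  - eapply Rle_trans; [|apply Rmax_r].
    apply (abs_le_sumZ_abs (fun i => a (2 * i + 1)%Z) K). intros i Hi. apply Ha. lia.
Qed.

Lemma subd_term_supported q K f i : supported_within q K ->
  supported_on (fun j => q (i - 2 * j)%Z * f j) ((i - Z.of_nat K) / 2)%Z (S K).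
Proof.
  intros Hq j Hj. rewrite Hq; [lra|]. rewrite Nat2Z.inj_succ in Hj.
  Z.div_mod_to_equations. lia.
Qed.

Lemma subd_abs_le q K Q f B i : supported_within q K -> (forall l, Rabs (q l) <= Q) ->
  (forall j, Rabs (f j) <= B) -> Rabs (subd q f i) <= INR (S K) * (Q * B).
Proof.
  intros Hq HQ HB. apply (sumZ_abs_le _ _ _ _ (subd_term_supported q K f i Hq)).
  intro j. rewrite Rabs_mult. apply Rmult_le_compat; auto using Rabs_pos.
Qed.

Lemma subd_sub_r q K f g i : supported_within q K ->
  subd q f i - subd q g i = subd q (fun j => f j - g j) i.
Proof.
  intro Hq. unfold subd.
  rewrite <- (sumZ_sub _ _ _ _ (subd_term_supported q K f i Hq) (subd_term_supported q K g i Hq)).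
  apply sumZ_ext. intro; ring.
Qed.

Lemma subd_sub_l q q' K f i : supported_within q K -> supported_within q' K ->
  subd q f i - subd q' f i = subd (fun l => q l - q' l) f i.
Proof.
  intros Hq Hq'. unfold subd.
  rewrite <- (sumZ_sub _ _ _ _ (subd_term_supported q K f i Hq) (subd_term_supported q' K f i Hq')).
  apply sumZ_ext. intro; ring.
Qed.

Lemma subd_indicator0 q i : subd q (fun j => if Z.eqb j 0 then 1 else 0) i = q i.
Proof.
  unfold subd. rewrite <- (sumZ_indicator 0 (q i)). apply sumZ_ext. intro j.
  destruct (Z.eqb_spec j 0) as [->|]; [rewrite Z.mul_0_r, Z.sub_0_r|]; ring.
Qed.

Lemma mask_norm_sub_le_opnorm_subd q qs K : supported_within q K -> supported_within qs K ->
  mask_norm (fun i => q i - qs i) <= opnorm (fun f i => subd q f i - subd qs f i).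
Proof.
  intros Hq Hqs.
  destruct (supported_within_bounded q K Hq) as [Q HQ].
  destruct (supported_within_bounded qs K Hqs) as [Qs HQs].
  assert (Hbound : forall f i, (forall j, Rabs (f j) <= 1) ->
            Rabs (subd q f i - subd qs f i) <= INR (S K) * (Q * 1) + INR (S K) * (Qs * 1)).
  { intros f i Hf. eapply Rle_trans; [apply Rabs_triang|]. rewrite Rabs_Ropp.
    apply Rplus_le_compat; apply (subd_abs_le _ K); auto. }
  apply mask_norm_le. intro i.
  rewrite <- (subd_indicator0 q i), <- (subd_indicator0 qs i).
  apply (proj1 (opnorm_spec _ _ Hbound)).
  intro j. destruct (Z.eqb j 0); rewrite ?Rabs_R1, ?Rabs_R0; lra.
Qed.

Lemma is_lim_seq_lincomb_0 u v x y : is_lim_seq u 0 -> is_lim_seq v 0 ->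
  is_lim_seq (fun n => x * u n + y * v n) 0.
Proof.
  intros Hu Hv.
  pose proof (is_lim_seq_scal_l u x 0 Hu) as H1. simpl in H1. rewrite Rmult_0_r in H1.
  pose proof (is_lim_seq_scal_l v y 0 Hv) as H2. simpl in H2. rewrite Rmult_0_r in H2.
  pose proof (is_lim_seq_plus' _ _ 0 0 H1 H2) as H3. rewrite Rplus_0_r in H3. exact H3.
Qed.

Lemma is_lim_seq_scal_0 u x : is_lim_seq u 0 -> is_lim_seq (fun n => x * u n) 0.
Proof.
  intro Hu. apply (is_lim_seq_ext (fun n => x * u n + 0 * u n)); [intro; ring|].
  apply is_lim_seq_lincomb_0; auto.
Qed.

Lemma is_lim_seq_squeeze_0 u v : (forall n, 0 <= u n <= v n) -> is_lim_seq v 0 -> is_lim_seq u 0.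
Proof. intros H Hv. apply (is_lim_seq_le_le (fun _ => 0) u v); auto using is_lim_seq_const. Qed.

Lemma is_lim_seq_upper_bound u (l : R) : is_lim_seq u l -> exists M, forall n, u n <= M.
Proof.
  intro H. apply is_lim_seq_Reals in H.
  destruct (cauchy_bound u (CV_Cauchy u (exist _ l H))) as [M HM].
  exists M. intro n. apply HM. exists n. reflexivity.
Qed.

Lemma prod_ops_abs_le q K C k p f B :
  (forall m, supported_within (q m) K) -> (forall m l, Rabs (q m l) <= C) ->
  (forall j, Rabs (f j) <= B) -> forall i, Rabs (prod_ops q k p f i) <= (INR (S K) * C) ^ S p * B.
Proof.
  intros Hq HC. revert f B; induction p as [|p IH]; intros f B Hf i.
  - replace ((INR (S K) * C) ^ 1 * B) with (INR (S K) * (C * B)) by ring.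
    apply (subd_abs_le _ K); auto.
  - replace ((INR (S K) * C) ^ S (S p) * B)
      with (INR (S K) * (C * ((INR (S K) * C) ^ S p * B))) by (simpl; ring).
    apply (subd_abs_le _ K); auto.
Qed.

Section ProductDifference.

Variables (q qs : nat -> mask) (K : nat) (C : R).
Hypotheses (Hq : forall m, supported_within (q m) K) (Hqs : forall m, supported_within (qs m) K)
  (HC : forall m l, Rabs (q m l) <= C) (HCs : forall m l, Rabs (qs m l) <= C)
  (Hlim : is_lim_seq (fun k => mask_norm (fun i => q k i - qs k i)) 0).

Let c := INR (S K).
Let D k := mask_norm (fun i => q k i - qs k i).

Lemma sub_abs_le_D m l : Rabs (q m l - qs m l) <= D m.
Proof. exact (abs_le_mask_norm _ K l (supported_within_sub _ _ K (Hq m) (Hqs m))). Qed.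

(* Telescoping: S_(q m) P - S_(qs m) Ps = S_(q m) (P - Ps) + S_(q m - qs m) Ps,
   where P and Ps are the products of the first p + 1 operators. *)
Lemma prod_ops_sub_bound p : exists e : nat -> R, is_lim_seq e 0 /\
  forall k f B, (forall j, Rabs (f j) <= B) ->
  forall i, Rabs (prod_ops q k p f i - prod_ops qs k p f i) <= e k * B.
Proof.
  induction p as [|p [e [He Hbound]]].
  - exists (fun k => c * D k). split; [apply is_lim_seq_scal_0, Hlim|].
    intros k f B Hf i. simpl. rewrite (subd_sub_l _ _ K _ _ (Hq k) (Hqs k)), Rmult_assoc.
    apply (subd_abs_le _ K); auto using supported_within_sub, sub_abs_le_D.
  - exists (fun k => (c * C) * e k + (c * (c * C) ^ S p) * D (k + S p)%nat). split.
    { apply is_lim_seq_lincomb_0; [exact He|].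
      exact (proj1 (is_lim_seq_incr_n D (S p) 0) Hlim). }
    intros k f B Hf i. cbn [prod_ops]. set (m := (k + S p)%nat).
    replace (subd (q m) (prod_ops q k p f) i - subd (qs m) (prod_ops qs k p f) i) with
      ((subd (q m) (prod_ops q k p f) i - subd (q m) (prod_ops qs k p f) i) +
       (subd (q m) (prod_ops qs k p f) i - subd (qs m) (prod_ops qs k p f) i)) by ring.
    rewrite (subd_sub_r _ K _ _ _ (Hq m)), (subd_sub_l _ _ K _ _ (Hq m) (Hqs m)).
    eapply Rle_trans; [apply Rabs_triang|].
    replace ((c * C * e k + c * (c * C) ^ S p * D m) * B) with
      (c * (C * (e k * B)) + c * (D m * ((c * C) ^ S p * B))) by ring.
    apply Rplus_le_compat; apply (subd_abs_le _ K); auto using supported_within_sub, sub_abs_le_D.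
    intro j. apply (prod_ops_abs_le _ K); auto.
Qed.

Lemma opnorm_prod_ops_sub_lim p : is_lim_seq (fun k => opnorm (fun f i =>
  prod_ops q k p f i - prod_ops qs k p f i)) 0.
Proof.
  destruct (prod_ops_sub_bound p) as [e [He Hbound]].
  apply (is_lim_seq_squeeze_0 _ e); [|exact He]. intro k.
  assert (Hb : forall f i, (forall j, Rabs (f j) <= 1) ->
            Rabs (prod_ops q k p f i - prod_ops qs k p f i) <= e k).
  { intros f i Hf. rewrite <- (Rmult_1_r (e k)). auto. }
  split; [exact (opnorm_nonneg _ _ Hb)|exact (proj2 (opnorm_spec _ _ Hb))].
Qed.

End ProductDifference.

Lemma diff_mask_dist_le a b K : supported_within a K -> supported_within b K ->
  mask_norm (fun i => diff_mask a i - diff_mask b i)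
  <= INR (2 * K + 1) * mask_norm (fun i => a i - b i).
Proof.
  intros Ha Hb. apply mask_norm_le. intro i.
  rewrite (diff_mask_sub a b K i Ha Hb).
  apply (diff_mask_abs_le _ K); [apply supported_within_sub; auto|].
  intro j. apply (abs_le_mask_norm (fun i => a i - b i) K), supported_within_sub; auto.
Qed.

Lemma dist_le_diff_mask_dist a b K : supported_within a K -> supported_within b K ->
  supported_within (diff_mask a) K -> supported_within (diff_mask b) K ->
  mask_norm (fun i => a i - b i) <= 2 * mask_norm (fun i => diff_mask a i - diff_mask b i).
Proof.
  intros Ha Hb Hqa Hqb. apply mask_norm_le. intro i.
  rewrite (diff_mask_recover a K i Ha), (diff_mask_recover b K i Hb).
  replace (diff_mask a i + diff_mask a (i - 1)%Z - (diff_mask b i + diff_mask b (i - 1)%Z))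
    with ((diff_mask a i - diff_mask b i) + (diff_mask a (i - 1)%Z - diff_mask b (i - 1)%Z))
    by ring.
  eapply Rle_trans; [apply Rabs_triang|].
  pose proof (supported_within_sub _ _ K Hqa Hqb) as Hq.
  pose proof (abs_le_mask_norm _ K i Hq). pose proof (abs_le_mask_norm _ K (i - 1)%Z Hq).
  simpl in *. lra.
Qed.

Section SchemePair.

Variables (a b : nat -> mask) (K : nat).
Hypotheses (Ha : forall k, supported_within (a k) K) (Hb : forall k, supported_within (b k) K)
  (Hqa : forall k, supported_within (diff_mask (a k)) K)
  (Hqb : forall k, supported_within (diff_mask (b k)) K).

Lemma asymptotically_similar_iff_diff :
  is_lim_seq (fun k => mask_norm (fun i => a k i - b k i)) 0 <->
  is_lim_seq (fun k => mask_norm (fun i => diff_mask (a k) i - diff_mask (b k) i)) 0.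
Proof.
  split; intro Hlim.
  - apply (is_lim_seq_squeeze_0 _ (fun k => INR (2 * K + 1) * mask_norm (fun i => a k i - b k i))).
    + intro k. split; [|apply diff_mask_dist_le; auto].
      apply (mask_norm_nonneg _ K), supported_within_sub; auto.
    + apply is_lim_seq_scal_0, Hlim.
  - apply (is_lim_seq_squeeze_0 _ (fun k => 2 * mask_norm (fun i => diff_mask (a k) i - diff_mask (b k) i))).
    + intro k. split; [|apply (dist_le_diff_mask_dist _ _ K); auto].
      apply (mask_norm_nonneg _ K), supported_within_sub; auto.
    + apply is_lim_seq_scal_0, Hlim.
Qed.

Lemma diff_mask_bounded_of_bounded_scheme : bounded_scheme a ->
  exists C, forall k l, Rabs (diff_mask (a k) l) <= C.
Proof.
  intros [C HC]. exists (INR (2 * K + 1) * C). intros k l.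
  apply (diff_mask_abs_le _ K); [apply Ha|]. intro j.
  eapply Rle_trans; [apply (abs_le_subd_norm _ K j (Ha k))|apply HC].
Qed.

End SchemePair.

Lemma diff_masks_bounded a b K :
  (forall k, supported_within (a k) K) -> (forall k, supported_within (b k) K) ->
  (forall k, supported_within (diff_mask (a k)) K) -> (forall k, supported_within (diff_mask (b k)) K) ->
  bounded_scheme a \/ bounded_scheme b ->
  is_lim_seq (fun k => mask_norm (fun i => diff_mask (a k) i - diff_mask (b k) i)) 0 ->
  exists C, (forall k l, Rabs (diff_mask (a k) l) <= C) /\ (forall k l, Rabs (diff_mask (b k) l) <= C).
Proof.
  intros Ha Hb Hqa Hqb Hbd Hlim.
  destruct (is_lim_seq_upper_bound _ _ Hlim) as [M HM].
  assert (Hclose : forall k l, Rabs (diff_mask (a k) l - diff_mask (b k) l) <= M).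
  { intros k l. eapply Rle_trans; [|apply HM].
    apply (abs_le_mask_norm (fun i => diff_mask (a k) i - diff_mask (b k) i) K).
    apply supported_within_sub; auto. }
  assert (HM0 : 0 <= M) by (eapply Rle_trans; [apply Rabs_pos|apply (Hclose 0%nat 0%Z)]).
  destruct Hbd as [Hbd|Hbd];
    [destruct (diff_mask_bounded_of_bounded_scheme a K Ha Hbd) as [C HC]
    |destruct (diff_mask_bounded_of_bounded_scheme b K Hb Hbd) as [C HC]];
    exists (C + M); split; intros k l; specialize (HC k l); specialize (Hclose k l);
    revert HC Hclose; unfold Rabs; repeat destruct Rcase_abs; lra.
Qed.

Theorem proposition8 (a astar : nat -> Z -> R) :
  local a -> local astar ->
  reproduces_constants a -> reproduces_constants astar ->
  ((is_lim_seq (fun k => mask_norm (fun i => a k i - astar k i)) 0 <->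
    is_lim_seq (fun k => mask_norm (fun i => diff_mask (a k) i - diff_mask (astar k) i)) 0)
  /\
  ((bounded_scheme a \/ bounded_scheme astar) ->
   (is_lim_seq (fun k => mask_norm (fun i => a k i - astar k i)) 0 <->
    forall p : nat,
      is_lim_seq (fun k => opnorm (fun f i =>
          prod_ops (fun m => diff_mask (a m)) k p f i
          - prod_ops (fun m => diff_mask (astar m)) k p f i)) 0))).
Proof.
  intros [Na [_ HNa]] [Ns [_ HNs]] Ra Rs.
  set (K := Z.to_nat (Z.max Na Ns)).
  assert (Ha : forall k, supported_within (a k) K) by (intros k i Hi; apply HNa; lia).
  assert (Hs : forall k, supported_within (astar k) K) by (intros k i Hi; apply HNs; lia).
  assert (Hqa : forall k, supported_within (diff_mask (a k)) K)
    by (intro k; apply diff_mask_supported; apply Ra || apply Ha).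
  assert (Hqs : forall k, supported_within (diff_mask (astar k)) K)
    by (intro k; apply diff_mask_supported; apply Rs || apply Hs).
  pose proof (asymptotically_similar_iff_diff a astar K Ha Hs Hqa Hqs) as Hiff.
  split; [exact Hiff|]. intro Hbd. rewrite Hiff. split.
  - intros Hlim p.
    destruct (diff_masks_bounded a astar K Ha Hs Hqa Hqs Hbd Hlim) as [C [HCa HCs]].
    apply (opnorm_prod_ops_sub_lim _ _ K C); auto.
  - intro Hlim. apply (is_lim_seq_squeeze_0 _ _) with (2 := Hlim 0%nat). intro k. split.
    + apply (mask_norm_nonneg (fun i => diff_mask (a k) i - diff_mask (astar k) i) K).
      apply supported_within_sub; auto.
    + apply (mask_norm_sub_le_opnorm_subd _ _ K); auto.
Qed.
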